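(* Let $f$ be the staircase function with descriptor $(h,o,\delta,\ell,L,V)$. For every integer $i\in[h]$, the fitness signal of step $i$ of $f$ is $S(\text{step } i)=\delta/2^{o(i-1)}$.
   Context: For a positive integer $n$, $[n]=\{1,\dots,n\}$ and $\mathfrak B_\ell$ is the set of binary strings of length $\ell$; $g_j$ denotes the $j$-th bit of $g$. For a $k$-tuple $x=(x_1,\dots,x_k)$ of integers in $[\ell]$ and $g\in\mathfrak B_\ell$, $\Xi_x(g)$ is the string $g_{x_1}g_{x_2}\cdots g_{x_k}$. For a matrix $M$, $M_{i:}$ is its $i$-th row (as a tuple). A staircase function descriptor is a tuple $(h,o,\delta,\ell,L,V)$ where $h,o,\ell$ are positive integers with $ho\le \ell$, $\delta>0$ is real, $V$ is an $h\times o$ matrix of bits, and $L$ is an $h\times o$ matrix whose $ho$ entries are pairwise distinct integers in $[\ell]$. The staircase function $f$ with this descriptor is the stochastic function on $\mathfrak B_\ell$ computed as follows on input $g$: draw $x\sim\mathcal N(0,1)$ (independently at each evaluation); for $i=1,\dots,h$ in order: if $\Xi_{L_{i:}}(g)=V_{i1}\cdots V_{io}$ then set $x\leftarrow x+\delta$, otherwise set $x\leftarrow x-\delta/(2^o-1)$ and stop the loop; return $x$. Step $i$ of $f$ is the schema $\{g\in\mathfrak B_\ell:\Xi_{L_{i:}}(g)=V_{i1}\cdots V_{io}\}$; stage $i$ of $f$ is the schema of all $g$ lying in steps $1,\dots,i$ simultaneously. For a schema $\gamma\subseteq\mathfrak B_\ell$, $F_\gamma$ is the random variable giving the value of $f$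 at a string drawn uniformly from $\gamma$. The fitness signal of $\gamma$ is $S(\gamma)=\mathbf E[F_\gamma]-\mathbf E[F_{\mathfrak B_\ell}]$. *)

From HB Require Import structures.
From mathcomp Require Import all_boot all_order all_algebra.
Set Implicit Arguments. Unset Strict Implicit. Unset Printing Implicit Defensive.
Import Order.TTheory GRing.Theory Num.Theory.
Local Open Scope ring_scope.

(* Binary strings of length l: g : bits l, bit j is g j, positions are 'I_l
   (0-based; position j here is position j+1 in the paper). *)
Definition bits (l : nat) := {ffun 'I_l -> bool}.

Definition Xi (l : nat) (x : seq 'I_l) (g : bits l) : seq bool := [seq g p | p <- x].

Definition mrow (T : Type) (h o : nat) (M : 'M[T]_(h, o)) (i : 'I_h) : seq T :=
  [seq M i j | j <- enum 'I_o].

Section Staircase.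
Variables (R : realFieldType) (h o l : nat) (delta : R)
          (L : 'M['I_l]_(h, o)) (V : 'M[bool]_(h, o)).

Definition in_step (i : 'I_h) (g : bits l) : bool := Xi (mrow L i) g == mrow V i.

Fixpoint loop_incr (g : bits l) (s : seq 'I_h) : R :=
  match s with
  | [::] => 0
  | i :: s' => if in_step i g then delta + loop_incr g s'
               else - (delta / (2%:R ^+ o - 1))
  end.

(* Expected value of f(g): f(g) = x + loop_incr g (enum 'I_h) with x ~ N(0,1),
   so E[f(g)] = E[x] + loop_incr = loop_incr (E[N(0,1)] = 0). *)
Definition Ef (g : bits l) : R := loop_incr g (enum 'I_h).

Definition EF (gamma : {set bits l}) : R :=
  (\sum_(g in gamma) Ef g) / (#|gamma|%:R).

Definition signal (gamma : {set bits l}) : R := EF gamma - EF [set: bits l].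

Definition step_set (i : 'I_h) : {set bits l} := [set g | in_step i g].

End Staircase.

From HB Require Import structures.
From mathcomp Require Import all_boot all_order all_algebra.
From mathcomp Require Import ring.
Import Order.TTheory GRing.Theory Num.Theory.
Set Implicit Arguments. Unset Strict Implicit. Unset Printing Implicit Defensive.

(* The loop of f adds delta for every step passed before the first failure and
   then subtracts c = delta / (2^o - 1) once, so E[f(g)] is a sum over steps j
   of delta [g in stage j+1] - c ([g in stage j] - [g in stage j+1]).  A schema
   cut out by a set U of steps contains 2^l / 2^(o |U|) strings, because the
   steps occupy pairwise distinct positions.  Hence, averaged over the schema
   of U, the term of a step j outside U vanishes: fixing the o further bits of
   step j divides the count by 2^o, and c is exactly the compensating penalty.
   Over the whole space nothing survives; over step i only the term of i does,
   and it is delta times the fraction 2^(-o i) of step i lying in stage i+1. *)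

Lemma mem_take_enum (n t : nat) (k : 'I_n) : (k \in take t (enum 'I_n)) = (k < t)%N.
Proof.
rewrite -(mem_map val_inj) map_take val_enum_ord take_iota mem_iota /=.
by rewrite leq_min ltn_ord andbT.
Qed.

Section Schemata.
Variables (h o l : nat) (L : 'M['I_l]_(h, o)) (V : 'M[bool]_(h, o)).
Hypothesis L_inj : injective (fun p : 'I_h * 'I_o => L p.1 p.2).

Definition in_steps (T : {set 'I_h}) (g : bits l) := [forall k in T, in_step L V k g].

Definition schema (T : {set 'I_h}) : {set bits l} := [set g | in_steps T g].

Lemma in_stepP j (g : bits l) : reflect (forall k, g (L j k) = V j k) (in_step L V j g).
Proof.
rewrite /in_step /Xi /mrow -map_comp.
apply: (iffP eqP) => [/eq_in_map Hg k | Hg]; first by apply: Hg; rewrite mem_enum.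
by apply/eq_in_map => k _; apply: Hg.
Qed.

Lemma in_stepsU (A B : {set 'I_h}) g : in_steps (A :|: B) g = in_steps A g && in_steps B g.
Proof.
apply/forall_inP/andP => [Hg | [/forall_inP HA /forall_inP HB] k].
  by split; apply/forall_inP => k kin; apply: Hg; rewrite inE kin ?orbT.
by rewrite inE => /orP [/HA|/HB].
Qed.

Lemma schema0 : schema set0 = setT.
Proof. by apply/setP => g; rewrite !inE; apply/forall_inP => k; rewrite inE. Qed.

Lemma schema1 j : schema [set j] = step_set L V j.
Proof.
apply/setP => g; rewrite !inE; apply/forall_inP/idP => [Hg | Hg k].
  by apply: Hg; rewrite inE.
by rewrite inE => /eqP ->.
Qed.

Definition fixed_pos (T : {set 'I_h}) : {set 'I_l} :=
  (fun p : 'I_h * 'I_o => L p.1 p.2) @: setX T setT.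

Definition allowed (T : {set 'I_h}) (p : 'I_l) : pred bool :=
  [pred b | [forall j in T, forall k, (L j k == p) ==> (b == V j k)]].

Lemma card_fixed_pos T : #|fixed_pos T| = (#|T| * o)%N.
Proof. by rewrite card_imset // cardsX cardsT card_ord. Qed.

Lemma schema_family T : schema T =i family (allowed T).
Proof.
move=> g; rewrite inE; apply/forall_inP/familyP => [Hg p | Hg j jT].
  apply/forall_inP => j jT; apply/forallP => k; apply/implyP => /eqP <-.
  by apply/eqP; move/in_stepP: (Hg j jT); apply.
apply/in_stepP => k; have /forall_inP /(_ j jT) /forallP /(_ k) := Hg (L j k).
by rewrite eqxx => /eqP.
Qed.

Lemma card_allowed T p : #|allowed T p| = if p \in fixed_pos T then 1%N else 2%N.
Proof.
case: ifP => [/imsetP [[j0 k0]] | pNfixed].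
  rewrite inE /= => /andP [j0T _] ->; rewrite -(card1 (V j0 k0)).
  apply: eq_card => b; rewrite !inE; apply/forall_inP/eqP => [Hb | ->].
    by have /forallP /(_ k0) := Hb j0 j0T; rewrite eqxx => /eqP.
  move=> j jT; apply/forallP => k; apply/implyP => /eqP Ljk.
  by have [-> ->] : (j, k) = (j0, k0) by apply: L_inj.
rewrite -card_bool; apply: eq_card => b; rewrite !inE.
apply/forall_inP => j jT; apply/forallP => k; apply/implyP => /eqP Ljk.
move: pNfixed; rewrite -Ljk.
by rewrite (imset_f (fun p : 'I_h * 'I_o => L p.1 p.2) (_ : (j, k) \in setX T setT)) // !inE jT.
Qed.

Lemma card_schema T : (#|schema T| * 2 ^ (o * #|T|) = 2 ^ l)%N.
Proof.
rewrite (eq_card (schema_family T)) card_family foldrE big_image /=.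
under eq_bigr do rewrite card_allowed -if_neg.
rewrite -big_mkcondr prod_nat_const -expnD.
rewrite (eq_card (B := ~: fixed_pos T)) => [|p]; last by rewrite inE.
congr (_ ^ _); have := cardsC (fixed_pos T); rewrite card_ord card_fixed_pos.
by rewrite addnC mulnC.
Qed.

Lemma card_schema_gt0 T : (0 < #|schema T|)%N.
Proof.
rewrite lt0n; apply/eqP => schemaT0; have := card_schema T.
by rewrite schemaT0 mul0n => /esym/eqP; rewrite expn_eq0.
Qed.

Lemma card_schema_shift (T T' : {set 'I_h}) k : #|T'| = (#|T| + k)%N ->
  (#|schema T'| * 2 ^ (o * k) = #|schema T|)%N.
Proof.
move=> cardT'; apply/eqP; rewrite -(eqn_pmul2r (expn_gt0 2 (o * #|T|))) card_schema.
by rewrite -mulnA -expnD -mulnDr addnC -cardT' card_schema.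
Qed.

End Schemata.

Section Signal.
Variables (R : realFieldType) (h o l : nat) (delta : R)
          (L : 'M['I_l]_(h, o)) (V : 'M[bool]_(h, o)).

Local Open Scope ring_scope.
Local Notation penalty := (delta / (2%:R ^+ o - 1)).
Local Notation in_steps := (in_steps L V).
Local Notation schema := (schema L V).

Lemma loop_incrE g s :
  loop_incr delta L V g s = \sum_(t < size s)
    (delta * (all (in_step L V ^~ g) (take t.+1 s))%:R
     - penalty * ((all (in_step L V ^~ g) (take t s))%:R
                  - (all (in_step L V ^~ g) (take t.+1 s))%:R)).
Proof.
elim: s => [|i s IHs] /=; first by rewrite big_ord0.
rewrite big_ord_recl /= take0 /=; case: (in_step L V i g) => /=.
  by rewrite IHs; ring.
by rewrite big1 => [|t _]; rewrite /=; ring.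
Qed.

(* stage j is the paper's stage j: the first j steps, 'I_h being 0-based. *)
Definition stage (j : nat) : {set 'I_h} := [set k : 'I_h | (k < j)%N].

Lemma stageS (j : 'I_h) : stage j.+1 = j |: stage j.
Proof. by apply/setP => k; rewrite !inE ltnS leq_eqVlt. Qed.

Lemma card_stage j : (j <= h)%N -> #|stage j| = j.
Proof.
move=> jh; rewrite -sum1_card; under eq_bigl do rewrite inE.
by rewrite (big_ord_narrow jh) sum1_card card_ord.
Qed.

Lemma all_in_step_take_enum g (t : nat) :
  all (in_step L V ^~ g) (take t (enum 'I_h)) = in_steps (stage t) g.
Proof.
apply/allP/forall_inP => [Hg k | Hg k].
  by rewrite inE => kt; apply: Hg; rewrite mem_take_enum.
by rewrite mem_take_enum => kt; apply: Hg; rewrite inE.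
Qed.

Definition step_incr (j : 'I_h) (g : bits l) : R :=
  delta * (in_steps (stage j.+1) g)%:R
  - penalty * ((in_steps (stage j) g)%:R - (in_steps (stage j.+1) g)%:R).

Lemma Ef_sum_step_incr g : Ef delta L V g = \sum_(j < h) step_incr j g.
Proof.
rewrite /Ef loop_incrE size_enum_ord; apply: eq_bigr => j _.
by rewrite /step_incr !all_in_step_take_enum.
Qed.

Lemma sum_schema_indicator (U T : {set 'I_h}) :
  \sum_(g in schema U) (in_steps T g)%:R = #|schema (U :|: T)|%:R :> R.
Proof.
rewrite -sumr_const big_mkcond [RHS]big_mkcond /=; apply: eq_bigr => g _.
by rewrite !inE in_stepsU; case: (in_steps U g); case: (in_steps T g).
Qed.

Lemma sum_schema_step_incr (U : {set 'I_h}) j : \sum_(g in schema U) step_incr j g =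
  delta * #|schema (j |: (U :|: stage j))|%:R
  - penalty * (#|schema (U :|: stage j)|%:R - #|schema (j |: (U :|: stage j))|%:R).
Proof. by rewrite sumrB -!mulr_sumr sumrB !sum_schema_indicator stageS setUCA. Qed.

Lemma sum_schema_step_incr_in (U : {set 'I_h}) j : j \in U ->
  \sum_(g in schema U) step_incr j g = delta * #|schema (U :|: stage j)|%:R.
Proof.
move=> jU; rewrite sum_schema_step_incr.
have -> : j |: (U :|: stage j) = U :|: stage j.
  by rewrite setUA; congr (_ :|: _); apply/setUidPr; rewrite sub1set.
by rewrite subrr mulr0 subr0.
Qed.

Hypothesis L_inj : injective (fun p : 'I_h * 'I_o => L p.1 p.2).
Hypothesis o_gt0 : (0 < o)%N.

Lemma sum_schema_step_incr_out (U : {set 'I_h}) j : j \notin U ->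
  \sum_(g in schema U) step_incr j g = 0.
Proof.
move=> jNU; rewrite sum_schema_step_incr.
set X := U :|: stage j.
have cardS : #|j |: X| = (#|X| + 1)%N by rewrite cardsU1 !inE negb_or jNU ltnn addnC.
have /(congr1 (GRing.natmul (1 : R))) := card_schema_shift V L_inj cardS.
rewrite muln1 natrM natrX => <-.
have N_gt1 : (1 : R) < 2%:R ^+ o by rewrite -natrX ltr1n -{1}(expn0 2) ltn_exp2l.
by field; rewrite subr_eq0 gt_eqF.
Qed.

Lemma sum_schema_Ef (U : {set 'I_h}) : \sum_(g in schema U) Ef delta L V g =
  \sum_(j in U) delta * #|schema (U :|: stage j)|%:R.
Proof.
under eq_bigr do rewrite Ef_sum_step_incr.
rewrite exchange_big (bigID (mem U)) /= [X in _ + X]big1 ?addr0 => [|j jNU].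
  by apply: eq_bigr => j jU; rewrite sum_schema_step_incr_in.
exact: sum_schema_step_incr_out.
Qed.

End Signal.

Local Open Scope ring_scope.

Theorem theorem1 (R : realFieldType) (h o l : nat) (delta : R)
    (L : 'M['I_l]_(h, o)) (V : 'M[bool]_(h, o)) :
  (0 < h)%N -> (0 < o)%N -> (0 < l)%N -> (h * o <= l)%N -> 0 < delta ->
  injective (fun p : 'I_h * 'I_o => L p.1 p.2) ->
  forall i : 'I_h,
    signal delta L V (step_set L V i) = delta / (2%:R ^+ (o * i)).
Proof.
move=> _ o_gt0 _ _ _ L_inj i.
rewrite /signal /EF -schema1 -(schema0 L V) !(sum_schema_Ef delta V L_inj o_gt0).
rewrite (big_set0 _ +%R) mul0r subr0 big_set1 -stageS.
have cardS : #|stage h i.+1| = (#|[set i]| + i)%N by rewrite card_stage // cards1.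
have /(congr1 (GRing.natmul (1 : R))) := card_schema_shift V L_inj cardS.
rewrite natrM natrX => <-.
have := card_schema_gt0 V L_inj (stage h i.+1); rewrite -(ltr0n R) => schema_gt0.
by rewrite invfM mulrA mulfK // gt_eqF.
Qed.
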